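(* Let $X$ be sampled uniformly at random from $\{0,1,2,3\}^n$. Then $\Pr[X \text{ is regular}]\ge 7/8$.
   Context: Logarithms are base $2$. Define $w(0)=0$, $w(1)=1$, $w(2)=2\log n+11$, $w(3)=2\log n+12$. A string $x\in\{0,1,2,3\}^n$ is regular if for every symbol $a\in\{0,1,2,3\}$ and all $1\le j\le k\le n$ such that some $i\in[j,k]$ has $x_i\ne a$, it holds that $\sum_{i=j}^k (w(x_i)-w(a))\neq 0$. *)

From Stdlib Require Import Reals.
From HB Require Import structures.
From mathcomp Require Import all_boot all_order all_algebra.
From mathcomp Require Import Rstruct.
Set Implicit Arguments. Unset Strict Implicit. Unset Printing Implicit Defensive.
Import Order.TTheory GRing.Theory Num.Theory.
Local Open Scope ring_scope.

Definition log2n (n : nat) : R := (ln (n%:R) / ln 2)%R.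

Definition w (n : nat) (a : 'I_4) : R :=
  match nat_of_ord a with
  | 0 => 0
  | 1 => 1
  | 2 => 2 * log2n n + 11
  | _ => 2 * log2n n + 12
  end.

(* x in {0,1,2,3}^n (positions 0..n-1 instead of 1..n) is regular *)
Definition regular (n : nat) (x : {ffun 'I_n -> 'I_4}) : bool :=
  [forall a : 'I_4, forall j : 'I_n, forall k : 'I_n,
     ((j <= k)%N && [exists i : 'I_n, ((j <= i <= k)%N) && (x i != a)]) ==>
     ((\sum_(i : 'I_n | (j <= i <= k)%N) (w n (x i) - w n a)) != 0)].

Definition prob_regular (n : nat) : R :=
  (#|[set x : {ffun 'I_n -> 'I_4} | regular x]|%:R / #|{ffun 'I_n -> 'I_4}|%:R).

From Stdlib Require Import Reals.
From HB Require Import structures.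
From mathcomp Require Import all_boot all_order all_algebra.
From mathcomp Require Import Rstruct ring lra zify.
Set Implicit Arguments. Unset Strict Implicit. Unset Printing Implicit Defensive.
Import Order.TTheory GRing.Theory Num.Theory.
Local Open Scope ring_scope.

(* Write L = 2 log n + 11 = w 2, so that w y = L [y >= 2] + [y odd].  A window
   [j, k] witnessing non-regularity is balanced against some symbol a; for a = 0
   or a = 3 all the differences w(x_i) - w(a) have the same sign, and for a = 1
   (resp. a = 2) balance says that L times the number of symbols >= 2 (resp.
   <= 1) in the window equals the number of even (resp. odd) ones.  Hence the
   window contains such a symbol, but at most a 1/p fraction of them, where
   p = 2 floor(log n) + 11 <= L.  An exponential moment bound with base 5/4
   shows that a fixed window of length m is this sparse for at most a b^m
   fraction of the words, b = (5/4 + (5/4)^(1-p)) / 2; summing the geometric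
   tails over all windows bounds the fraction of non-regular words by
   2 n b^p / (1 - b), which is at most 1/8. *)

Lemma card_bigcup_le (T I : finType) (P : pred I) (B : I -> {set T}) :
  (#|\bigcup_(i | P i) B i| <= \sum_(i | P i) #|B i|)%N.
Proof.
elim/big_rec2: _ => [|i m U _ leUm]; first by rewrite cards0.
by rewrite (leq_trans (leq_card_setU _ _).1) ?leq_add2l.
Qed.

Lemma sumr_eq0P_sign (K : numDomainType) (I : finType) (P : pred I) (F : I -> K) s :
  s != 0 -> (forall i, P i -> 0 <= s * F i) -> \sum_(i | P i) F i = 0 ->
  forall i, P i -> F i = 0.
Proof.
move=> s_neq0 sF_ge0 sum0 i Pi.
have ssum0 : \sum_(i | P i) s * F i = 0 by rewrite -mulr_sumr sum0 mulr0.
by move: (psumr_eq0P sF_ge0 ssum0 Pi) => /eqP; rewrite mulf_eq0 (negbTE s_neq0) => /eqP.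
Qed.

Lemma geometric_sum_le (K : numFieldType) (b : K) m :
  0 <= b < 1 -> \sum_(i < m) b ^+ i <= (1 - b)^-1.
Proof.
case/andP=> b_ge0 b_lt1.
have telescope : (1 - b) * \sum_(i < m) b ^+ i = 1 - b ^+ m.
  by rewrite -[LHS]opprK -mulNr opprB -subrX1 opprB.
have b1_gt0 : 0 < 1 - b by rewrite subr_gt0.
rewrite -[leLHS](mulKf (lt0r_neq0 b1_gt0)) telescope.
by rewrite ler_piMr ?gerBl ?exprn_ge0 // invr_ge0 ltW.
Qed.

Section Windows.
Variables (T : Type) (n : nat).
Implicit Types (g h : pred T) (j k : 'I_n) (x : {ffun 'I_n -> T}).

Definition window_size j k : nat := #|[pred i : 'I_n | (j <= i <= k)%N]|.

Definition window_count g j k x : nat := \sum_(i : 'I_n | (j <= i <= k)%N) g (x i).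

Definition sparse_in p g j k x : bool :=
  (0 < window_count g j k x)%N && (p * window_count g j k x <= window_size j k)%N.

Lemma window_sizeE j k : window_size j k = (k.+1 - j)%N.
Proof.
rewrite /window_size -sum1_card.
rewrite (eq_bigl (fun i : 'I_n => (j <= i) && (i < k.+1))%N); last first.
  by move=> i; rewrite inE ltnS.
rewrite -(big_mkord (fun i => (j <= i) && (i < k.+1))%N (fun _ => 1%N)).
rewrite -big_nat_widen; last exact: ltn_ord.
rewrite (eq_bigl (fun i => true && (j <= i)%N)) // -big_nat_widenl //.
by rewrite sum_nat_const_nat muln1.
Qed.

Lemma window_count_le_size g j k x : (window_count g j k x <= window_size j k)%N.
Proof.
by rewrite /window_count /window_size -sum1_card; apply: leq_sum => i _; apply: leq_b1.
Qed.

Lemma sparse_in_size p g j k x : sparse_in p g j k x -> (p <= window_size j k)%N.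
Proof. by case/andP=> /(leq_pmulr p); apply: leq_trans. Qed.

Lemma sparse_in_of_balance (L : R) p g h j k x :
  p%:R <= L -> L * (window_count g j k x)%:R = (window_count h j k x)%:R ->
  (exists2 i : 'I_n, (j <= i <= k)%N & g (x i) || h (x i)) -> sparse_in p g j k x.
Proof.
move=> pL balance [i i_jk ghi].
have count_ge (f : pred T) : (f (x i) <= window_count f j k x)%N.
  by rewrite /window_count (bigD1 i) ?leq_addr.
have count_gt0 : (0 < window_count g j k x)%N.
  case/orP: ghi => [gi | hi]; first by apply: leq_trans (count_ge g); rewrite gi.
  rewrite lt0n; apply/eqP => g0; move: balance (count_ge h).
  by rewrite g0 mulr0 hi => /esym/eqP; rewrite pnatr_eq0 => /eqP->.
rewrite /sparse_in count_gt0 -(ler_nat R) natrM.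
apply: le_trans (ler_wpM2r (ler0n _ _) pL) _.
by rewrite balance ler_nat window_count_le_size.
Qed.

Lemma sum_window_tail (b : R) p j : 0 <= b < 1 -> (0 < p)%N ->
  \sum_(k : 'I_n | (p <= window_size j k)%N) b ^+ window_size j k <= b ^+ p / (1 - b).
Proof.
move=> b01 p_gt0; set s := (j + p.-1)%N.
rewrite (eq_big (fun k : 'I_n => true && (s <= k))%N (fun k : 'I_n => b ^+ (k.+1 - j))).
- rewrite -(big_geq_mkord s n xpredT (fun i => b ^+ (i.+1 - j))) -[s]add0n big_addn big_mkord.
  rewrite (eq_bigr (fun i : 'I_(n - s) => b ^+ i * b ^+ p)) => [|i _]; last first.
    by rewrite -exprD; congr (_ ^+ _); rewrite /s; lia.
  rewrite -mulr_suml mulrC ler_wpM2l ?exprn_ge0 //; first by case/andP: b01.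
  exact: geometric_sum_le.
- by move=> k; rewrite window_sizeE; lia.
- by move=> k _; rewrite window_sizeE.
Qed.

End Windows.

Definition chernoff_base (v : R) p := (v + v / v ^+ p) / 2.

Lemma chernoff_base_ge0 (v : R) p : 0 <= v -> 0 <= chernoff_base v p.
Proof. by move=> v_ge0; rewrite divr_ge0 ?addr_ge0 ?divr_ge0 ?exprn_ge0. Qed.

Lemma chernoff_base_antitone (v : R) p q :
  1 <= v -> (q <= p)%N -> chernoff_base v p <= chernoff_base v q.
Proof.
move=> v_ge1 qp; have v_gt0 : 0 < v by apply: lt_le_trans v_ge1.
rewrite /chernoff_base ler_pM2r ?invr_gt0 ?ltr0n // lerD2l ler_pM2l //.
by rewrite lef_pV2 ?posrE ?exprn_gt0 //; apply: ler_weXn2l.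
Qed.

Section ChernoffBound.
Variables (T : finType) (g : pred T) (v : R) (n p : nat).
Hypotheses (g_half : (#|g|.*2 = #|T|)%N) (v_ge1 : 1 <= v).

Lemma sum_if_half (a b : R) :
  \sum_(y : T) (if g y then a else b) = #|T|%:R * ((a + b) / 2).
Proof.
rewrite (bigID g) /=.
under [X in X + _]eq_bigr => y gy do rewrite gy.
under [X in _ + X]eq_bigr => y /negbTE gy do rewrite gy.
have cardCg : #|[predC g]| = #|g| by have := cardC g; rewrite -g_half; lia.
rewrite !sumr_const cardCg -g_half -mul2n natrM.
by field.
Qed.

Lemma card_sparse_in_le (j k : 'I_n) :
  #|[set x : {ffun 'I_n -> T} | sparse_in p g j k x]|%:R
    <= #|T|%:R ^+ n * chernoff_base v p ^+ window_size j k.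
Proof.
have v_gt0 : 0 < v by apply: lt_le_trans v_ge1.
pose F (i : 'I_n) (y : T) :=
  if (j <= i <= k)%N then (if g y then v / v ^+ p else v) else 1.
have F_ge0 i y : 0 <= F i y.
  rewrite /F; case: ifP => _ //; case: (g y); last exact: ltW.
  by rewrite divr_ge0 ?exprn_ge0 ?ltW.
(* Markov's inequality for an exponential moment: the mean of F i over a
   uniform symbol is [chernoff_base v p] inside the window, and the product of
   the F i (x i) is v ^ (m - p c) >= 1 on a sparse window of length m with
   c symbols in g. *)
have tilted x : sparse_in p g j k x -> 1 <= \prod_i F i (x i).
  case/andP=> _ few; rewrite /F -big_mkcond /=.
  rewrite (eq_bigr (fun i => v * (v ^+ p)^-1 ^+ g (x i))); last first.
    by move=> i _; case: (g (x i)); rewrite ?expr1 ?expr0 ?mulr1.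
  rewrite big_split /= prodr_const prodrXr -/(window_count g j k x) -/(window_size j k).
  rewrite exprVn -exprM ler_pdivlMr ?exprn_gt0 // mul1r.
  exact: ler_weXn2l few.
set S := [set x | sparse_in p g j k x].
rewrite -sum1_card natr_sum.
apply: (@le_trans _ _ (\sum_(x in S) \prod_i F i (x i))).
  by apply: ler_sum => x; rewrite inE; apply: tilted.
apply: (@le_trans _ _ (\sum_(x : {ffun 'I_n -> T}) \prod_i F i (x i))).
  rewrite [leRHS](bigID [in S]) /= lerDl.
  by apply: sumr_ge0 => x _; apply: prodr_ge0.
rewrite -bigA_distr_bigA /=.
rewrite (eq_bigr (fun i : 'I_n =>
  #|T|%:R * (if (j <= i <= k)%N then chernoff_base v p else 1))) => [|i _]; last first.
  rewrite /F; case: ifP => _; last by rewrite sumr_const mulr1.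
  by rewrite sum_if_half /chernoff_base addrC.
by rewrite big_split /= prodr_const card_ord -big_mkcond prodr_const.
Qed.

Lemma sum_card_sparse_in_le (j : 'I_n) :
  (0 < p)%N -> chernoff_base v p < 1 ->
  \sum_(k : 'I_n) #|[set x : {ffun 'I_n -> T} | sparse_in p g j k x]|%:R
    <= #|T|%:R ^+ n * (chernoff_base v p ^+ p / (1 - chernoff_base v p)).
Proof.
move=> p_gt0 base_lt1.
rewrite (bigID (fun k => p <= window_size j k)%N) /= [X in _ + X]big1 ?addr0; last first.
  move=> k short; rewrite (_ : [set x | _] = set0) ?cards0 //.
  apply/setP => x; rewrite !inE; apply: contraNF short; exact: sparse_in_size.
rewrite (le_trans (ler_sum _ (fun k _ => card_sparse_in_le j k))) // -mulr_sumr.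
rewrite ler_wpM2l ?exprn_ge0 //.
by apply: sum_window_tail => //; rewrite chernoff_base_ge0 // (le_trans ler01).
Qed.

End ChernoffBound.

Definition heavy_weight n := 2 * log2n n + 11.

Definition heavy (y : 'I_4) : bool := (2 <= y)%N.
Definition light (y : 'I_4) : bool := (y <= 1)%N.

Lemma wE n y : w n y = heavy_weight n * (heavy y)%:R + (odd y)%:R.
Proof.
case: y => [[|[|[|[|//]]]] y4];
  rewrite /w /heavy /heavy_weight /= ?R0E ?R1E ?RplusE ?RmultE ?IZRposE ?INRE /=; lra.
Qed.

Lemma w_inj n : 1 < heavy_weight n -> injective (w n).
Proof.
move=> L_gt1 [[|[|[|[|//]]]] ?] [[|[|[|[|//]]]] ?]; rewrite !wE /= => E.
all: first [exact: val_inj | exfalso; lra].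
Qed.

Lemma not_regular_sparse n p (x : {ffun 'I_n -> 'I_4}) :
  (1 < p)%N -> p%:R <= heavy_weight n -> ~~ regular x ->
  exists j k : 'I_n, sparse_in p heavy j k x || sparse_in p light j k x.
Proof.
move=> p_gt1 pL /forallPn[a /forallPn[j /forallPn[k]]].
rewrite negb_imply negbK => /andP[/andP[_ /existsP[i /andP[i_jk xi_a]]] /eqP balanced].
exists j, k.
have L_gt1 : 1 < heavy_weight n by apply: lt_le_trans pL; rewrite ltr1n.
have wxi_neq : w n (x i) - w n a != 0 by rewrite subr_eq0 (inj_eq (w_inj L_gt1)).
have count_sum (f : pred 'I_4) :
  (window_count f j k x)%:R = \sum_(i : 'I_n | (j <= i <= k)%N) (f (x i))%:R :> R.
  by rewrite natr_sum.
case: a xi_a wxi_neq balanced => [[|[|[|[|//]]]] a4] xi_a wxi_neq balanced.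
- suff w_ge (i0 : 'I_n) : (j <= i0 <= k)%N -> 0 <= 1 * (w n (x i0) - w n (Ordinal a4)).
    by move: wxi_neq; rewrite (sumr_eq0P_sign (oner_neq0 R) w_ge balanced i_jk) eqxx.
  move=> _; rewrite !wE; case: (x i0) => [[|[|[|[|//]]]] ?] /=; lra.
- apply/orP; left; apply: (sparse_in_of_balance (h := fun y : 'I_4 => ~~ odd y) pL).
    rewrite !count_sum mulr_sumr; apply/eqP.
    rewrite -subr_eq0 -sumrB -[X in _ == X]balanced.
    apply/eqP; apply: eq_bigr => i0 _; rewrite !wE; case: (x i0) => [[|[|[|[|//]]]] ?] /=; lra.
  by exists i => //; case: (x i) xi_a => [[|[|[|[|//]]]] ?].
- apply/orP; right; apply: (sparse_in_of_balance (h := fun y : 'I_4 => odd y) pL).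
    rewrite !count_sum mulr_sumr; apply/eqP.
    rewrite -subr_eq0 -sumrB -oppr_eq0 -sumrN -[X in _ == X]balanced.
    apply/eqP; apply: eq_bigr => i0 _; rewrite !wE; case: (x i0) => [[|[|[|[|//]]]] ?] /=; lra.
  by exists i => //; case: (x i) xi_a => [[|[|[|[|//]]]] ?].
- have m1_neq0 : -1 != 0 :> R by rewrite oppr_eq0 oner_eq0.
  suff w_le (i0 : 'I_n) : (j <= i0 <= k)%N -> 0 <= -1 * (w n (x i0) - w n (Ordinal a4)).
    by move: wxi_neq; rewrite (sumr_eq0P_sign m1_neq0 w_le balanced i_jk) eqxx.
  move=> _; rewrite !wE; case: (x i0) => [[|[|[|[|//]]]] ?] /=; lra.
Qed.

Lemma card_heavy : (#|heavy|.*2 = #|'I_4|)%N.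
Proof. by rewrite card_ord -sum1_card big_mkcond !big_ord_recl big_ord0. Qed.

Lemma card_light : (#|light|.*2 = #|'I_4|)%N.
Proof. by rewrite card_ord -sum1_card big_mkcond !big_ord_recl big_ord0. Qed.

Lemma card_not_regular_le n p (v : R) :
  (1 < p)%N -> p%:R <= heavy_weight n -> 1 <= v -> chernoff_base v p < 1 ->
  #|[set x : {ffun 'I_n -> 'I_4} | ~~ regular x]|%:R
    <= 2 * n%:R * 4 ^+ n * (chernoff_base v p ^+ p / (1 - chernoff_base v p)).
Proof.
move=> p_gt1 pL v_ge1 base_lt1.
set Bad := [set x : {ffun 'I_n -> 'I_4} | ~~ regular x].
set S := fun (g : pred 'I_4) (j k : 'I_n) =>
  [set x : {ffun 'I_n -> 'I_4} | sparse_in p g j k x].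
have cover : Bad \subset \bigcup_j \bigcup_k (S heavy j k :|: S light j k).
  apply/subsetP => x; rewrite inE => /(not_regular_sparse p_gt1 pL)[j [k sparse]].
  by apply/bigcupP; exists j => //; apply/bigcupP; exists k; rewrite ?inE.
have union_bound : (#|Bad| <= \sum_j \sum_k (#|S heavy j k| + #|S light j k|))%N.
  apply: leq_trans (subset_leq_card cover) _.
  apply: leq_trans (card_bigcup_le _ _) _; apply: leq_sum => j _.
  apply: leq_trans (card_bigcup_le _ _) _; apply: leq_sum => k _.
  exact: (leq_card_setU _ _).1.
have p_gt0 : (0 < p)%N by apply: ltnW.
set tail := chernoff_base v p ^+ p / (1 - chernoff_base v p).
apply: (@le_trans _ _ (\sum_(j : 'I_n) 2 * (4 ^+ n * tail))).
  rewrite -(ler_nat R) natr_sum in union_bound; apply: le_trans union_bound _.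
  apply: ler_sum => j _; rewrite natr_sum.
  under eq_bigr do rewrite natrD.
  rewrite big_split /= mulr2n mulrDl mul1r.
  have := sum_card_sparse_in_le card_heavy v_ge1 j p_gt0 base_lt1.
  have := sum_card_sparse_in_le card_light v_ge1 j p_gt0 base_lt1.
  by rewrite card_ord => *; apply: lerD.
by rewrite sumr_const card_ord -mulr_natl; lra.
Qed.

(* Under a [: R] ascription numerals are read in Stdlib's [R_scope]; [%:R]
   keeps them in [ring_scope], where [lra] computes with them. *)
Definition tilt := (5%:R : R) / 4%:R.

Lemma tilt_ge1 : 1 <= tilt.
Proof. rewrite /tilt; lra. Qed.

Lemma tilt_base_le p : (11 <= p)%N -> chernoff_base tilt p <= 17 / 25.
Proof.
move=> p_ge11; apply: le_trans (chernoff_base_antitone tilt_ge1 p_ge11) _.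
rewrite /chernoff_base /tilt; lra.
Qed.

Lemma tilt_tail_small e n : (n < 2 ^ e.+1)%N ->
  16 * n%:R * chernoff_base tilt (2 * e + 11) ^+ (2 * e + 11)
    <= 1 - chernoff_base tilt (2 * e + 11).
Proof.
(* For n = 1 the exponent 11 suffices; otherwise the factor n < 4 * 2^e is
   absorbed by (2 b^2)^e <= 1, paid for by the extra exponent 2 e. *)
case: e => [|e] n_lt /=; set b := chernoff_base tilt _.
all: have b_ge0 : 0 <= b by rewrite chernoff_base_ge0 // (le_trans ler01 tilt_ge1).
  have n_le1 : n%:R <= 1 :> R by rewrite lern1 -ltnS -(expn1 2).
  have b_le : b <= 17 / 25 by apply: tilt_base_le.
  have b11 : b ^+ 11 <= (17 / 25) ^+ 11 by apply: lerXn2r => //; rewrite nnegrE; lra.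
  have := exprn_ge0 11 b_ge0.
  by nra.
have b_le : b <= 33 / 50.
  apply: le_trans (chernoff_base_antitone tilt_ge1 (_ : 13 <= _)%N) _; first lia.
  rewrite /chernoff_base /tilt; lra.
have -> : (2 * e.+1 + 11 = 13 + 2 * e)%N by lia.
rewrite exprD exprM.
have n_le : n%:R <= 4 * 2 ^+ e :> R.
  rewrite -natrX -natrM ler_nat -ltnS (leq_trans n_lt) //.
  by rewrite !expnS mulnA.
have b13 : b ^+ 13 <= (33 / 50) ^+ 13 by apply: lerXn2r => //; rewrite nnegrE; lra.
have halving : 2 ^+ e * (b ^+ 2) ^+ e <= 1.
  rewrite -exprMn; apply: exprn_ile1; first by rewrite mulr_ge0 ?exprn_ge0.
  have : b ^+ 2 <= (33 / 50) ^+ 2 by apply: lerXn2r => //; rewrite nnegrE; lra.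
  lra.
clearbody b.
have b13_ge0 := exprn_ge0 13 b_ge0; have b2e_ge0 := exprn_ge0 e (exprn_ge0 2 b_ge0).
apply: le_trans (_ : 64 * b ^+ 13 <= _); last lra.
apply: le_trans (_ : 16 * (4 * 2 ^+ e) * (b ^+ 13 * (b ^+ 2) ^+ e) <= _).
  by rewrite ler_wpM2r ?mulr_ge0 // ler_wpM2l.
have -> : 16 * (4 * 2 ^+ e) * (b ^+ 13 * (b ^+ 2) ^+ e)
    = 64 * b ^+ 13 * (2 ^+ e * (b ^+ 2) ^+ e) by ring.
by rewrite ler_piMr ?mulr_ge0.
Qed.

Lemma trunc_log2_le_log2n n : (0 < n)%N -> (trunc_log 2 n)%:R <= log2n n.
Proof.
move=> n_gt0; set e := trunc_log 2 n.
have ln2_gt0 : 0 < ln 2.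
  by have := ln_increasing _ _ Rlt_0_1 (IZR_lt 1 2 erefl); rewrite ln_1 => /RltP.
have ln_pow2 : e%:R * ln 2 = ln (2 ^ e)%:R.
  by rewrite natrX -RpowE ln_pow ?INRE //; apply/RltP; rewrite ltr0n.
rewrite /log2n ler_pdivlMr // ln_pow2.
have : (2 ^ e)%:R <= n%:R :> R by rewrite ler_nat trunc_logP.
rewrite le_eqVlt => /predU1P[-> //|lt].
by apply/ltW/RltP/ln_increasing; apply/RltP; rewrite // ltr0n expn_gt0.
Qed.

Theorem lemma2 (n : nat) (hn : (0 < n)%N) : 7 / 8 <= prob_regular n.
Proof.
set e := trunc_log 2 n; set p := (2 * e + 11)%N; set b := chernoff_base tilt p.
have pL : p%:R <= heavy_weight n.
  by have := trunc_log2_le_log2n hn; rewrite /heavy_weight /p natrD natrM; lra.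
have b_lt1 : b < 1 by apply: le_lt_trans (tilt_base_le _) _; rewrite ?leq_addl //; lra.
have tail : 16 * n%:R * b ^+ p <= 1 - b := tilt_tail_small (trunc_log_ltn n (isT : 1 < 2)%N).
have p_gt1 : (1 < p)%N by rewrite /p; lia.
have := card_not_regular_le p_gt1 pL tilt_ge1 b_lt1; rewrite -/b => bad.
have rate : 2 * n%:R * (b ^+ p / (1 - b)) <= 1 / 8.
  by rewrite mulrA ler_pdivrMr ?subr_gt0 //; lra.
have split_regular : [set x : {ffun 'I_n -> 'I_4} | ~~ regular x] = ~: [set x | regular x].
  by apply/setP => x; rewrite !inE.
have := cardsC [set x : {ffun 'I_n -> 'I_4} | regular x].
rewrite -split_regular card_ffun !card_ord => /(congr1 (fun m => m%:R : R)).
rewrite natrD natrX => total.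
rewrite /prob_regular card_ffun !card_ord natrX ler_pdivlMr ?exprn_gt0 //.
have := ler_wpM2l (ltW (exprn_gt0 n (ltr0n R 4))) rate.
lra.
Qed.
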